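(* Let $\mathbb{F}$ be an infinite field (e.g. $\mathbb{R}$ or $\mathbb{C}$). Let $n\ge 1$, let $L_1,\dots,L_n\ge 1$ be integers, and put $N=\prod_{i=1}^n L_i$ and $P_i=\prod_{k=1}^{i-1}L_k$ (so $P_1=1$). Consider the sliced-contraction setting described in the context with $m_i=2$ for every $i$: finite-dimensional $\mathbb{F}$-vector spaces $V_{i,1},V_{i,2}$ ($i=1,\dots,n$), $W$, a multilinear map $\Phi: V_{1,1}\times V_{1,2}\times\cdots\times V_{n,1}\times V_{n,2}\to W$, and sliced tensors $A^{(i,j)}_{s}\in V_{i,j}$ for $s=1,\dots,L_i$, with target $$\sigma_{\mathrm{final}}=\sum_{s_1=1}^{L_1}\cdots\sum_{s_n=1}^{L_n}\Phi\big(A^{(1,1)}_{s_1},A^{(1,2)}_{s_1},\dots,A^{(n,1)}_{s_n},A^{(n,2)}_{s_n}\big).$$ For $x\in\mathbb{F}$ define the encoded tensors $$\tilde A^{(i,1)}(x)=\sum_{s=1}^{L_i}A^{(i,1)}_{s}\,x^{(s-1)P_i},\qquad \tilde A^{(i,2)}(x)=\sum_{s=1}^{L_i}A^{(i,2)}_{s}\,x^{(L_i-s)P_i},$$ and $g(x)=\Phi\big(\tilde A^{(1,1)}(x),\tilde A^{(1,2)}(x),\dots,\tilde A^{(n,1)}(x),\tilde A^{(n,2)}(x)\big)$. Then $g(x)=\sum_{e=0}^{2(N-1)}c_e x^e$ is a polynomial with coefficients $c_e\in W$ of degree at most $2(N-1)$, and its coefficient of $x^{N-1}$ is $c_{N-1}=\sigma_{\mathrm{final}}$.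 Consequently, for every integer $f\ge 0$, the scheme with $K=f+2N-1$ workers, worker $k$ computing $g(x_k)$ for pairwise distinct $x_1,\dots,x_K\in\mathbb{F}$, allows the master to recover $\sigma_{\mathrm{final}}$ from the outputs of any $K-f=2N-1$ workers. Hence the $f$-resilient number $f+2\prod_{i=1}^nL_i-1$ is achievable, and the gain compared to naive replication is $\Delta=N(f+1)-(f+2N-1)=\big(\prod_{i=1}^nL_i-1\big)(f-1)$.
   Context: Setting (sliced parallel tensor network contraction). A tensor network is contracted in parallel by ''slicing'' $n$ of its closed indices: index $i$ has dimension $L_i$ and is shared by $m_i$ tensors (an ''$m_i$-node index''), and the sliced indices are pairwise non-adjacent, i.e. no tensor carries two sliced indices. Fixing the value $s_i\in\{1,\dots,L_i\}$ of each sliced index turns each of the $m_i$ tensors attached to index $i$ into a sliced subtensor $A^{(i,j)}_{s_i}\in V_{i,j}$ ($j=1,\dots,m_i$), and contracting the rest of the network (all tensors not attached to sliced indices, together with all non-sliced indices) is a multilinear map $\Phi:\prod_{i=1}^n\prod_{j=1}^{m_i}V_{i,j}\to W$. The sliced partition for $(s_1,\dots,s_n)$ is $\sigma_{s_1\cdots s_n}=\Phi(A^{(1,1)}_{s_1},\dots,A^{(1,m_1)}_{s_1},\dots,A^{(n,1)}_{s_n},\dots,A^{(n,m_n)}_{s_n})$, and the desired output is $\sigma_{\mathrm{final}}=\sum_{s_1,\dots,s_n}\sigma_{s_1\cdots s_n}$; there are $N=\prod_i L_i$ sliced partitions. Computing model: a master distributes work to workers; each worker evaluates $\Phi$ once on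 one input from each $V_{i,j}$ (so it has the same computational cost as computing one sliced partition) and returns the result; up to $f$ workers may fail, and nothing is recovered from a failed worker. The $f$-resilient number of a scheme is the total number of workers required so that $\sigma_{\mathrm{final}}$ can be retrieved despite any $f$ worker failures. Naive replication (each of the $N$ sliced partitions computed by $f+1$ workers) has $f$-resilient number $N(f+1)$; the gain of a scheme is $N(f+1)$ minus its $f$-resilient number. *)

From HB Require Import structures.
From mathcomp Require Import all_boot all_order all_algebra.
Set Implicit Arguments. Unset Strict Implicit. Unset Printing Implicit Defensive.
Import GRing.Theory.
Local Open Scope ring_scope.

(* Index set of the 2n sliced subtensors: pairs (i, j), i < n, j < 2
   (0-based; j = 0 stands for the paper's j = 1, j = 1 for j = 2). *)
Definition idx (n : nat) := ('I_n * 'I_2)%type.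

Definition multilinear (F : fieldType) (I : finType) (V : I -> vectType F)
  (W : vectType F) (Phi : (forall p, V p) -> W) : Prop :=
  forall (a : forall p, V p) (p : I) (c : F) (u v : V p),
    Phi (dfwith a (c *: u + v)) = c *: Phi (dfwith a u) + Phi (dfwith a v).

Definition Nsl (n : nat) (L : 'I_n -> nat) : nat := (\prod_(i < n) L i)%N.

Definition Psl (n : nat) (L : 'I_n -> nat) (i : 'I_n) : nat :=
  (\prod_(k < n | (k < i)%N) L k)%N.

(* Exponent of x multiplying the slice s (0-based, s = paper's s - 1):
   j = 0 : (s-1) P_i  ~> s * P_i ;  j = 1 : (L_i - s) P_i ~> (L_i - 1 - s) * P_i *)
Definition expo (n : nat) (L : 'I_n -> nat) (i : 'I_n) (j : 'I_2) (s : nat) : nat :=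
  if j == 0 then (s * Psl L i)%N else ((L i - 1 - s) * Psl L i)%N.

Definition enc (F : fieldType) (n : nat) (L : 'I_n -> nat)
  (V : idx n -> vectType F) (A : forall p : idx n, 'I_(L p.1) -> V p) (x : F)
  : forall p : idx n, V p :=
  fun p => \sum_(s < L p.1) x ^+ (expo L p.1 p.2 s) *: A p s.

Definition gpoly (F : fieldType) (n : nat) (L : 'I_n -> nat)
  (V : idx n -> vectType F) (W : vectType F) (Phi : (forall p : idx n, V p) -> W)
  (A : forall p : idx n, 'I_(L p.1) -> V p) (x : F) : W :=
  Phi (enc A x).

Definition sigma_final (F : fieldType) (n : nat) (L : 'I_n -> nat)
  (V : idx n -> vectType F) (W : vectType F) (Phi : (forall p : idx n, V p) -> W)
  (A : forall p : idx n, 'I_(L p.1) -> V p) : W :=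
  \sum_(t : {dffun forall i : 'I_n, 'I_(L i)}) Phi (fun p => A p (t p.1)).

From HB Require Import structures.
From mathcomp Require Import all_boot all_order all_algebra.
From mathcomp Require Import zify.
From Stdlib Require Import FunctionalExtensionality.
Import GRing.Theory.
Local Open Scope ring_scope.

(* Expanding g by multilinearity gives one term x ^ deg t * Phi (A at t) for each choice t
   of a slice for each of the 2n factors, with
   deg t = sum_i t(i,1) P_i + sum_i (L_i - 1 - t(i,2)) P_i.
   The sums sum_i s_i P_i with digits s_i < L_i are the mixed-radix numerals below N, so
   deg t <= 2(N - 1), and deg t = N - 1 exactly when the two numerals coincide, i.e. when
   t(i,1) = t(i,2) for all i: these are the terms of sigma_final.  Any 2N - 1 values of g
   at distinct points determine its coefficients through an invertible Vandermonde system. *)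

Section MixedRadix.
Variable l : nat -> nat.
Hypothesis l_gt0 : forall k, (0 < l k)%N.

Definition radix_weight (k : nat) : nat := (\prod_(j < k) l j)%N.

Definition numeral (m : nat) (u : nat -> nat) : nat :=
  (\sum_(k < m) u k * radix_weight k)%N.

Lemma radix_weight_gt0 k : (0 < radix_weight k)%N.
Proof. by rewrite prodn_gt0. Qed.

Lemma radix_weightS k : radix_weight k.+1 = (radix_weight k * l k)%N.
Proof. by rewrite /radix_weight big_ord_recr. Qed.

Lemma numeralS m u : numeral m.+1 u = (numeral m u + u m * radix_weight m)%N.
Proof. by rewrite /numeral big_ord_recr. Qed.

Lemma numeral_max m : numeral m (fun k => (l k).-1) = (radix_weight m).-1.
Proof.
elim: m => [|m IH]; first by rewrite /numeral /radix_weight !big_ord0.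
rewrite numeralS IH radix_weightS.
have := radix_weight_gt0 m; have := l_gt0 m; nia.
Qed.

Lemma numeral_lt m u : (forall k, (k < m)%N -> (u k < l k)%N) ->
  (numeral m u < radix_weight m)%N.
Proof.
move=> u_lt; rewrite -[X in (_ < X)%N](prednK (radix_weight_gt0 m)) ltnS -numeral_max.
by apply: leq_sum => k _; rewrite leq_mul2r -ltnS prednK ?u_lt ?orbT.
Qed.

Lemma numeral_complementD m v : (forall k, (k < m)%N -> (v k < l k)%N) ->
  (numeral m (fun k => l k - 1 - v k) + numeral m v)%N = (radix_weight m).-1.
Proof.
move=> v_lt; rewrite -numeral_max /numeral -big_split; apply: eq_bigr => k _ /=.
by rewrite -mulnDl subnK ?subn1 // -ltnS prednK ?v_lt.
Qed.

Lemma numeral_inj m u v :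
  (forall k, (k < m)%N -> (u k < l k)%N) -> (forall k, (k < m)%N -> (v k < l k)%N) ->
  numeral m u = numeral m v -> forall k, (k < m)%N -> u k = v k.
Proof.
elim: m => [//|m IH] u_lt v_lt; rewrite !numeralS => Euv.
have u_ltm k : (k < m)%N -> (u k < l k)%N by move=> km; apply: u_lt; lia.
have v_ltm k : (k < m)%N -> (v k < l k)%N by move=> km; apply: v_lt; lia.
have top : u m = v m.
  have := congr1 (divn^~ (radix_weight m)) Euv.
  rewrite ![(numeral m _ + _)%N]addnC !divnMDl ?radix_weight_gt0 //.
  by rewrite !divn_small ?numeral_lt ?addn0.
move: Euv; rewrite top => /addIn Euv k; rewrite ltnS leq_eqVlt => /predU1P[->//|].
exact: IH.
Qed.

End MixedRadix.

Arguments numeral_lt {l} l_gt0 {m u}.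
Arguments numeral_complementD {l} l_gt0 {m v}.
Arguments numeral_inj {l} l_gt0 {m u v}.

Section SliceDegree.
Context {n : nat}.
Variable L : 'I_n -> nat.
Hypothesis L_gt0 : forall i, (0 < L i)%N.

Definition slice_deg (t : {dffun forall p : idx n, 'I_(L p.1)}) : nat :=
  (\sum_(p : idx n) expo L p.1 p.2 (t p))%N.

(* [l] and [digit] extend [L] and the slices of [t] to all of nat, so that the
   mixed-radix lemmas apply. *)
Let l (k : nat) : nat := if insub k is Some i then L i else 1%N.

Let l_gt0 k : (0 < l k)%N.
Proof. by rewrite /l; case: insub. Qed.

Let lE (i : 'I_n) : l i = L i.
Proof. by rewrite /l valK. Qed.

Let PslE (i : 'I_n) : Psl L i = radix_weight l i.
Proof.
rewrite /radix_weight (big_ord_widen_cond n xpredT l (ltnW (ltn_ord i))).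
by apply: eq_bigr => k _; rewrite lE.
Qed.

Let NslE : Nsl L = radix_weight l n.
Proof. by apply: eq_bigr => i _; rewrite lE. Qed.

Let digit (t : {dffun forall p : idx n, 'I_(L p.1)}) (j : 'I_2) (k : nat) : nat :=
  if insub k is Some i then nat_of_ord (t (i, j)) else 0%N.

Let digit_lt t j : forall k, (k < n)%N -> (digit t j k < l k)%N.
Proof. by move=> k _; rewrite /digit /l; case: insub. Qed.

Let digitE t j (i : 'I_n) : digit t j i = t (i, j).
Proof. by rewrite /digit valK. Qed.

Let slice_degE t : slice_deg t =
  (numeral l n (digit t ord0) + numeral l n (fun k => l k - 1 - digit t ord_max k))%N.
Proof.
rewrite /slice_deg (eq_bigr (fun p => expo L p.1 p.2 (t (p.1, p.2)))); last by case.
rewrite -(pair_big xpredT xpredT (fun i j => expo L i j (t (i, j)))) /numeral -big_split.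
apply: eq_bigr => i _.
rewrite big_ord_recl big_ord1.
have -> : lift ord0 ord0 = ord_max :> 'I_2 by apply: val_inj.
by rewrite /expo /= -PslE lE !digitE.
Qed.

Lemma slice_deg_le t : (slice_deg t <= 2 * (Nsl L - 1))%N.
Proof.
have := numeral_complementD l_gt0 (digit_lt t ord_max).
have := numeral_lt l_gt0 (digit_lt t ord0).
rewrite slice_degE NslE subn1; lia.
Qed.

Lemma slice_deg_center t :
  (slice_deg t == Nsl L - 1)%N = [forall i, t (i, ord0) == t (i, ord_max)].
Proof.
have := numeral_complementD l_gt0 (digit_lt t ord_max).
rewrite slice_degE NslE subn1 => compl; apply/eqP/forallP => [E i|diag].
  have Euv : numeral l n (digit t ord0) = numeral l n (digit t ord_max) by lia.
  apply/eqP/val_inj; rewrite /= -!digitE.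
  exact: (numeral_inj l_gt0 (digit_lt t ord0) (digit_lt t ord_max) Euv).
have -> : numeral l n (digit t ord0) = numeral l n (digit t ord_max).
  by apply: eq_bigr => i _; rewrite !digitE (eqP (diag i)).
lia.
Qed.

End SliceDegree.

Section DependentFamilies.
Context {I : finType} {J : I -> finType}.

Definition update_dffun (t : {dffun forall p, J p}) {q : I} (s : J q)
  : {dffun forall p, J p} := finfun (dfwith (fun p => t p) s).

Lemma update_dffunE t (q : I) (s : J q) p :
  update_dffun t s p = dfwith (fun p => t p) s p.
Proof. by rewrite ffunE. Qed.

Definition agrees_off (r : seq I) (t0 : forall p, J p) (t : {dffun forall p, J p}) :=
  [forall p, (p \notin r) ==> (t p == t0 p)].

Lemma big_agrees_off_cons (R : nmodType) (t0 : forall p, J p) q r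
    (G : {dffun forall p, J p} -> R) : q \notin r ->
  \sum_(t | agrees_off (q :: r) t0 t) G t =
  \sum_(s : J q) \sum_(t | agrees_off r t0 t) G (update_dffun t s).
Proof.
move=> qr; rewrite (partition_big (fun t : {dffun forall p, J p} => t q) xpredT) //=.
apply: eq_bigr => s _.
rewrite (reindex_onto (fun t => update_dffun t s) (fun t => update_dffun t (t0 q))).
  symmetry; apply: eq_big => // t.
  apply/idP/idP => [/forallP t_off | /andP[/andP[/forallP t_off _] /eqP t_back]].
    apply/andP; split; [apply/andP; split|].
    - apply/forallP => p; apply/implyP; rewrite in_cons negb_or => /andP[qp pr].
      by rewrite update_dffunE dfwith_out ?(implyP (t_off p) pr) // eq_sym.
    - by rewrite update_dffunE dfwith_in.
    - apply/eqP/ffunP => p; rewrite !update_dffunE.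
      case: dfwithP => [|p' qp]; last by rewrite /= update_dffunE dfwith_out.
      by apply/esym/eqP; exact: (implyP (t_off q) qr).
  apply/forallP => p; apply/implyP => pr; rewrite -t_back update_dffunE.
  have [<-|qp] := eqVneq q p; first by rewrite dfwith_in.
  rewrite dfwith_out //; have /implyP := t_off p; apply.
  by rewrite in_cons eq_sym (negPf qp).
move=> t /andP[_ /eqP <-]; apply/ffunP => p; rewrite !update_dffunE.
by case: dfwithP => [|p' qp] //=; rewrite update_dffunE dfwith_out.
Qed.

End DependentFamilies.

Lemma dfwith_if_cons (I : eqType) (T : I -> Type) (q : I) (r : seq I)
    (f z : forall p, T p) :
  (fun p => if p \in q :: r then f p else z p) =
  dfwith (fun p => if p \in r then f p else z p) (f q).
Proof.
apply: functional_extensionality_dep => p.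
case: dfwithP => [|p' qp]; first by rewrite mem_head.
by rewrite in_cons eq_sym (negPf qp).
Qed.

Lemma dfwith_if_notin (I : eqType) (T : I -> Type) (q : I) (r : seq I)
    (f z : forall p, T p) (x : T q) : q \notin r ->
  dfwith (fun p => if p \in r then f p else z p) x =
  (fun p => if p \in r then f p else dfwith z x p).
Proof.
move=> qr; apply: functional_extensionality_dep => p.
case: dfwithP => [|p' qp]; first by rewrite (negPf qr) dfwith_in.
by rewrite dfwith_out.
Qed.

Section Multilinear.
Context {F : fieldType} {I : finType} {V : I -> vectType F} {W : vectType F}.
Context {Phi : (forall p, V p) -> W}.
Hypothesis Phi_ml : multilinear Phi.

Lemma multilinear0 a p : Phi (dfwith a (0 : V p)) = 0.
Proof.
have h := Phi_ml a p 1 0 0; rewrite !scale1r addr0 in h.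
by apply: (addrI (Phi (dfwith a (0 : V p)))); rewrite addr0 -h.
Qed.

Lemma multilinearD a p (u v : V p) :
  Phi (dfwith a (u + v)) = Phi (dfwith a u) + Phi (dfwith a v).
Proof. by have := Phi_ml a p 1 u v; rewrite !scale1r. Qed.

Lemma multilinearZ a p c (u : V p) : Phi (dfwith a (c *: u)) = c *: Phi (dfwith a u).
Proof. by have := Phi_ml a p c u 0; rewrite !addr0 multilinear0 addr0. Qed.

Lemma multilinear_sum a p (S : finType) (y : S -> V p) :
  Phi (dfwith a (\sum_s y s)) = \sum_s Phi (dfwith a (y s)).
Proof. exact: (big_morph _ (multilinearD a p) (multilinear0 a p)). Qed.

Lemma multilinear_scale_seq (c : I -> F) (v : forall p, V p) (r : seq I) : uniq r ->
  Phi (fun p => if p \in r then c p *: v p else v p) = (\prod_(p <- r) c p) *: Phi v.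
Proof.
elim: r => [|q r IH] /=.
  by move=> _; rewrite big_nil scale1r; congr Phi; apply: functional_extensionality_dep.
case/andP=> qr r_uniq; rewrite dfwith_if_cons multilinearZ dfwith_if_notin //.
have -> : dfwith v (v q) = v.
  by apply: functional_extensionality_dep => p; case: dfwithP.
by rewrite IH // big_cons scalerA.
Qed.

(* The coordinates outside [r] are not expanded yet; in the index family they are frozen
   at [t0]. *)
Lemma multilinear_expand_seq {J : I -> finType} (y : forall p, J p -> V p)
    (t0 : forall p, J p) (z : forall p, V p) (r : seq I) : uniq r ->
  Phi (fun p => if p \in r then \sum_(s : J p) y p s else z p) =
  \sum_(t | agrees_off r t0 t) Phi (fun p => if p \in r then y p (t p) else z p).
Proof.
elim: r z => [|q r IH] z /=.
  move=> _; rewrite (big_pred1 (finfun t0 : {dffun forall p, J p})).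
    by congr Phi; apply: functional_extensionality_dep.
  move=> t; rewrite /agrees_off /=; apply/forallP/eqP => [t_off|->].
    by apply/ffunP => p; rewrite ffunE; apply/eqP; exact: t_off.
  by move=> p; rewrite ffunE.
case/andP=> qr r_uniq; rewrite dfwith_if_cons multilinear_sum big_agrees_off_cons //.
apply: eq_bigr => s _; rewrite dfwith_if_notin // IH //.
apply: eq_bigr => t _; rewrite dfwith_if_cons update_dffunE dfwith_in.
congr Phi; apply: functional_extensionality_dep => p.
case: dfwithP => [|p' qp]; first by rewrite (negPf qr) dfwith_in.
by rewrite dfwith_out // update_dffunE dfwith_out.
Qed.

Lemma multilinear_expand (J : I -> finType) (t0 : forall p, J p)
    (a : forall p, J p -> F) (B : forall p, J p -> V p) :
  Phi (fun p => \sum_(s : J p) a p s *: B p s) =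
  \sum_(t : {dffun forall p, J p}) (\prod_p a p (t p)) *: Phi (fun p => B p (t p)).
Proof.
have if_enum (T : I -> Type) (f z : forall p, T p) :
    (fun p => if p \in enum I then f p else z p) = f.
  by apply: functional_extensionality_dep => p; rewrite mem_enum.
have := multilinear_expand_seq (fun p s => a p s *: B p s) t0 (fun=> 0) _ (enum_uniq I).
under eq_bigr do rewrite if_enum.
rewrite if_enum => ->; apply: eq_big => [t|t _].
  by apply/forallP => p; rewrite mem_enum.
have := multilinear_scale_seq (fun p => a p (t p)) (fun p => B p (t p)) _ (enum_uniq I).
by rewrite if_enum big_enum.
Qed.

End Multilinear.

Lemma vandermonde_extract {F : fieldType} {D : nat} (a : 'I_D -> F) : injective a ->
  forall e0 : 'I_D, exists w : 'I_D -> F, forall (W : lmodType F) (c : 'I_D -> W),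
    \sum_(j < D) w j *: \sum_(e < D) a j ^+ e *: c e = c e0.
Proof.
move=> a_inj e0; pose M := Vandermonde D (\row_j a j).
have M_unit : M \in unitmx.
  rewrite unitmxE unitfE det_Vandermonde; apply/prodf_neq0 => i _.
  apply/prodf_neq0 => j ij; rewrite !mxE subr_eq0; apply/eqP => /a_inj eji.
  by move: ij; rewrite eji ltnn.
pose w := invmx M *m delta_mx e0 (0 : 'I_1).
have Mw (e : 'I_D) : \sum_j a j ^+ e * w j 0 = (e == e0)%:R.
  have := congr1 (fun m : 'cV_D => m e 0) (mulKVmx M_unit (delta_mx e0 0)).
  by rewrite !mxE andbT => <-; apply: eq_bigr => j _; rewrite !mxE.
exists (fun j => w j 0) => W c.
have coef_e (e : 'I_D) : \sum_j w j 0 *: (a j ^+ e *: c e) = (e == e0)%:R *: c e.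
  by rewrite -Mw scaler_suml; apply: eq_bigr => j _; rewrite scalerA mulrC.
under eq_bigr do rewrite scaler_sumr.
rewrite exchange_big (eq_bigr _ (fun e _ => coef_e e)) (bigD1 e0) //= eqxx scale1r.
by rewrite big1 ?addr0 // => e /negPf ->; rewrite scale0r.
Qed.

Section SlicedPolynomial.
Context {F : fieldType} {n : nat}.
Variable L : 'I_n -> nat.
Hypothesis L_gt0 : forall i, (0 < L i)%N.
Context {V : idx n -> vectType F} {W : vectType F}.
Variable Phi : (forall p : idx n, V p) -> W.
Hypothesis Phi_ml : multilinear Phi.
Variable A : forall p : idx n, 'I_(L p.1) -> V p.

Definition slice_coef (e : nat) : W :=
  \sum_(t : {dffun forall p : idx n, 'I_(L p.1)} | slice_deg L t == e)
    Phi (fun p => A p (t p)).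

Lemma gpoly_expansion x :
  gpoly Phi A x = \sum_(e < (2 * (Nsl L - 1)).+1) x ^+ e *: slice_coef e.
Proof.
have deg_lt t : (slice_deg L t < (2 * (Nsl L - 1)).+1)%N by rewrite ltnS slice_deg_le.
rewrite /gpoly /enc (multilinear_expand Phi_ml _ (fun p => Ordinal (L_gt0 p.1))).
under eq_bigr do rewrite prodrXr.
rewrite (partition_big (fun t => inord (slice_deg L t) : 'I_(2 * (Nsl L - 1)).+1) xpredT)
  //=.
apply: eq_bigr => e _; rewrite /slice_coef scaler_sumr; apply: eq_big => t.
  by rewrite -val_eqE /= inordK.
by move=> /eqP <-; rewrite inordK.
Qed.

Lemma slice_coef_center : slice_coef (Nsl L - 1) = sigma_final Phi A.
Proof.
pose diag (t' : {dffun forall i : 'I_n, 'I_(L i)}) : {dffun forall p : idx n, 'I_(L p.1)} :=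
  finfun (fun p => t' p.1).
pose proj (t : {dffun forall p : idx n, 'I_(L p.1)}) : {dffun forall i : 'I_n, 'I_(L i)} :=
  finfun (fun i => t (i, ord0)).
rewrite /slice_coef (reindex_onto diag proj) => [|t].
  apply: eq_big => [t'|t' _].
    rewrite slice_deg_center //; apply/andP; split.
      by apply/forallP => i; rewrite !ffunE.
    by apply/eqP/ffunP => i; rewrite !ffunE.
  by congr Phi; apply: functional_extensionality_dep => p; rewrite ffunE.
rewrite slice_deg_center // => /forallP diag_t.
apply/ffunP => -[i j]; rewrite !ffunE /=.
have [->|->] : j = ord0 \/ j = ord_max.
  by case: j => -[|[|//]] j_lt; [left|right]; apply: val_inj.
  by [].
exact: (eqP (diag_t i)).
Qed.

End SlicedPolynomial.

Theorem theorem1 (F : fieldType)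
  (F_infinite : forall s : seq F, exists x : F, x \notin s)
  (n : nat) (n_ge1 : (1 <= n)%N)
  (L : 'I_n -> nat) (L_ge1 : forall i, (1 <= L i)%N) :
  (* g is a polynomial of degree <= 2(N-1) whose coefficient of x^(N-1) is sigma_final *)
  (forall (V : idx n -> vectType F) (W : vectType F)
          (Phi : (forall p : idx n, V p) -> W),
      multilinear Phi ->
      forall A : forall p : idx n, 'I_(L p.1) -> V p,
      exists c : 'I_(2 * (Nsl L - 1)).+1 -> W,
        (forall x : F, gpoly Phi A x = \sum_(e < (2 * (Nsl L - 1)).+1) x ^+ e *: c e)
        /\ c (inord (Nsl L - 1)) = sigma_final Phi A)
  /\
  (* recovery from any K - f = 2N - 1 of the K = f + 2N - 1 workers *)
  (forall (f K : nat), K = (f + 2 * Nsl L - 1)%N ->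
   forall xs : 'I_K -> F, injective xs ->
   forall S : {set 'I_K}, #|S| = (K - f)%N ->
   forall W : vectType F,
   exists dec : ('I_K -> W) -> W,
     forall (V : idx n -> vectType F) (Phi : (forall p : idx n, V p) -> W),
       multilinear Phi ->
       forall A : forall p : idx n, 'I_(L p.1) -> V p,
         dec (fun k => if k \in S then gpoly Phi A (xs k) else 0)
         = sigma_final Phi A)
  /\
  (* gain over naive replication *)
  (forall f : nat,
     (Nsl L * (f + 1))%:Z - (f + 2 * Nsl L - 1)%:Z
     = ((Nsl L)%:Z - 1) * (f%:Z - 1)).
Proof.
have N_gt0 : (0 < Nsl L)%N by rewrite prodn_gt0.
pose D := (2 * (Nsl L - 1)).+1.
have center_lt : (Nsl L - 1 < D)%N by rewrite /D; lia.
split=> [V W Phi Phi_ml A|].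
  exists (fun e : 'I_D => slice_coef L Phi A e); split; first exact: gpoly_expansion.
  by rewrite inordK // slice_coef_center.
split=> [f K K_eq xs xs_inj S S_card W|f]; last lia.
have S_card_D : D = #|S| by rewrite S_card K_eq /D; lia.
pose h (j : 'I_D) : 'I_K := enum_val (cast_ord S_card_D j).
have xsh_inj : injective (fun j => xs (h j)).
  by move=> j1 j2 /xs_inj /enum_val_inj /cast_ord_inj.
have [w w_extract] := vandermonde_extract _ xsh_inj (inord (Nsl L - 1)).
exists (fun y => \sum_j w j *: y (h j)) => V Phi Phi_ml A.
rewrite -slice_coef_center // -(inordK center_lt).
rewrite -(w_extract _ (fun e => slice_coef L Phi A e)).
by apply: eq_bigr => j _; rewrite enum_valP (gpoly_expansion _ L_ge1 _ Phi_ml).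
Qed.
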